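(* Let $S=\{(x_1,x_2)\in\mathbb{R}^2:x_2^3-x_1^2\ge0\}$, so that $\overline{\mathrm{conv}(S)}=\{x_2\ge0\}$; let $\tilde S^{o}=\{(x_0,x_1,x_2):x_2^3-x_0x_1^2\ge0,\ x_0>0\}$ and $\tilde G=\{X_0,\ X_2^3-X_0X_1^2,\ X_0^2+X_1^2+X_2^2-1,\ 1-X_0^2-X_1^2-X_2^2\}$. Then $(0,\pm1,0)\in\overline{\tilde S^{o}}$, so $\mathrm{conv}(\overline{\tilde S^{o}})$ is not pointed, and $\widetilde{\mathrm{TH}}_k(\tilde G)=\mathbb{R}^2$ for every $k\ge1$; hence $\bigcap_k\widetilde{\mathrm{TH}}_k(\tilde G)\neq\overline{\mathrm{conv}(S)}$.
   Context: For a finite set $H$ of polynomials, $\mathcal{Q}_k(H)=\{\sum_{j}\sigma_jh_j:h_0=1,\ \sigma_j\text{ sums of squares},\ \deg(\sigma_jh_j)\le2k\}$. $\widetilde{\mathrm{TH}}_k(\tilde G)=\{(x_1,x_2):\tilde l(1,x_1,x_2)\ge0\ \forall\tilde l\in\mathcal{Q}_k(\tilde G)\text{ that is a linear form in }(X_0,X_1,X_2)\text{ or }0\}$. A closed convex cone $K$ is pointed if $K\cap(-K)=\{0\}$. *)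

(* Real numbers are modelled by an arbitrary real closed
   field R (rcfType); polynomials in X0,X1,X2 by nested univariate polynomials
   {poly {poly {poly R}}}: X0 = outer variable, X1 = middle, X2 = inner. *)
From HB Require Import structures.
From mathcomp Require Import all_boot all_order all_algebra.
Set Implicit Arguments. Unset Strict Implicit. Unset Printing Implicit Defensive.
Import Order.TTheory GRing.Theory Num.Theory.
Local Open Scope ring_scope.

Section Defs.
Variable R : rcfType.

Definition mpoly3 := {poly {poly {poly R}}}.
Definition PX0 : mpoly3 := 'X.
Definition PX1 : mpoly3 := ('X)%:P.
Definition PX2 : mpoly3 := ('X)%:P%:P.

Definition coef3 (p : mpoly3) (i j k : nat) : R := ((p`_i)`_j)`_k.

Definition ev3 (p : mpoly3) (a b c : R) : R :=
  (map_poly (fun q : {poly {poly R}} =>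
     (map_poly (fun r : {poly R} => r.[c]) q).[b]) p).[a].

Definition tdeg_le (p : mpoly3) (d : nat) : Prop :=
  forall i j k : nat, (d < i + j + k)%N -> coef3 p i j k = 0.

Definition is_sos (p : mpoly3) : Prop :=
  exists s : seq mpoly3, p = \sum_(q <- s) q ^+ 2.

(* truncated quadratic module Q_k(H), with h_0 = 1 prepended *)
Definition QM (H : seq mpoly3) (k : nat) (p : mpoly3) : Prop :=
  exists sig : 'I_(size H).+1 -> mpoly3,
    (forall j, is_sos (sig j) /\ tdeg_le (sig j * nth 0 (1 :: H) j) (2 * k)) /\
    p = \sum_(j < (size H).+1) sig j * nth 0 (1 :: H) j.

Definition is_linform (p : mpoly3) : Prop :=
  forall i j k : nat, (i + j + k != 1)%N -> coef3 p i j k = 0.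

Definition vec2 (a b : R) : 'rV[R]_2 := \row_(i < 2) nth 0 [:: a; b] i.
Definition vec3 (a b c : R) : 'rV[R]_3 := \row_(i < 3) nth 0 [:: a; b; c] i.

Definition THt (G : seq mpoly3) (k : nat) (x : 'rV[R]_2) : Prop :=
  forall l, QM G k l -> is_linform l ->
    0 <= ev3 l 1 (x ord0 (inord 0)) (x ord0 (inord 1)).

Definition clos n (A : 'rV[R]_n -> Prop) (x : 'rV[R]_n) : Prop :=
  forall e : R, 0 < e -> exists y, A y /\ forall i, `|y ord0 i - x ord0 i| < e.

Definition conv n (A : 'rV[R]_n -> Prop) (x : 'rV[R]_n) : Prop :=
  exists (m : nat) (w : 'I_m -> R) (p : 'I_m -> 'rV[R]_n),
    (forall i, 0 <= w i) /\ \sum_(i < m) w i = 1 /\ (forall i, A (p i)) /\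
    x = \sum_(i < m) w i *: p i.

Definition pointed n (K : 'rV[R]_n -> Prop) : Prop :=
  forall v, K v -> K (- v) -> v = 0.

Definition S_ex (x : 'rV[R]_2) : Prop :=
  0 <= (x ord0 (inord 1)) ^+ 3 - (x ord0 (inord 0)) ^+ 2.

Definition Sto_ex (x : 'rV[R]_3) : Prop :=
  0 <= (x ord0 (inord 2)) ^+ 3 - x ord0 (inord 0) * (x ord0 (inord 1)) ^+ 2 /\
  0 < x ord0 (inord 0).

Definition Gt_ex : seq mpoly3 :=
  [:: PX0; PX2 ^+ 3 - PX0 * PX1 ^+ 2;
      PX0 ^+ 2 + PX1 ^+ 2 + PX2 ^+ 2 - 1;
      1 - PX0 ^+ 2 - PX1 ^+ 2 - PX2 ^+ 2].

End Defs.

From HB Require Import structures.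
From mathcomp Require Import all_boot all_order all_algebra zify ring lra.
Import Order.TTheory GRing.Theory Num.Theory.
Set Implicit Arguments. Unset Strict Implicit. Unset Printing Implicit Defensive.
Local Open Scope ring_scope.

(* If l = A X0 + B X1 + C X2 lies in Q_k(G~), then l is
     nonnegative at every point of the sphere with x0 >= 0 and
     x2^3 >= x0 x1^2; the points (1,0,0) and (0,+-1,0) give A >= 0, B = 0.
     Restricting the certificate to the line X0 = 0, X1 = 1 turns it into
     C t = sigma(t) + t^2 r(t) with sigma a univariate sum of squares; then
     sigma(0) = B = 0 forces sigma'(0) = 0, i.e. C = 0.  Hence
     l(1, x1, x2) = A >= 0 for all (x1, x2): TH~_k(G~) is the whole plane.
   - Convex hull of S.  conv S lies in {x2 >= 0}, which is closed; conversely
     every (x1, x2) with x2 > 0 is on the segment from (0,0) to a point of S.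
   - Homogenisation.  (c^3, +-1, c) lies in S~o and tends to (0, +-1, 0), so
     conv of the closure contains a line and is not pointed. *)

Section TrivariatePolynomials.
Variable R : rcfType.
Notation P3 := (mpoly3 R).

Definition C3 (k : R) : P3 := k%:P%:P%:P.

Local Ltac eval_generators :=
  do 3 rewrite /= ?(map_polyC, map_polyX, horner_evalE, hornerC, hornerX).

Definition eval3 (a b c : R) : {rmorphism P3 -> R} :=
  horner_eval a \o map_poly (horner_eval b \o map_poly (horner_eval c)).

Lemma ev3E (p : P3) a b c : ev3 p a b c = eval3 a b c p.
Proof. by []. Qed.

Lemma eval3_PX0 a b c : eval3 a b c (PX0 R) = a. Proof. by eval_generators. Qed.
Lemma eval3_PX1 a b c : eval3 a b c (PX1 R) = b. Proof. by eval_generators. Qed.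
Lemma eval3_PX2 a b c : eval3 a b c (PX2 R) = c. Proof. by eval_generators. Qed.
Lemma eval3_C a b c k : eval3 a b c (C3 k) = k. Proof. by eval_generators. Qed.

Definition restrict01 : {rmorphism P3 -> {poly R}} :=
  horner_eval 0 \o map_poly (horner_eval 1).

Lemma restrict01_PX0 : restrict01 (PX0 R) = 0. Proof. by eval_generators. Qed.
Lemma restrict01_PX1 : restrict01 (PX1 R) = 1. Proof. by eval_generators. Qed.
Lemma restrict01_PX2 : restrict01 (PX2 R) = 'X. Proof. by eval_generators. Qed.
Lemma restrict01_C k : restrict01 (C3 k) = k%:P. Proof. by eval_generators. Qed.

Lemma linform_decomp (l : P3) : is_linform l ->
  l = C3 (coef3 l 1 0 0) * PX0 R + C3 (coef3 l 0 1 0) * PX1 R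
      + C3 (coef3 l 0 0 1) * PX2 R.
Proof.
move=> lin; apply/polyP => i; apply/polyP => j; apply/polyP => k.
rewrite /C3 /PX0 /PX1 /PX2 !coefD !coefCM !coefC !coefX.
case: i => [|[|i]]; case: j => [|[|j]]; case: k => [|[|k]] /=;
  rewrite ?(coefD, coefCM, coefC, coefX, mulr0, mulr1, addr0, add0r) //=;
  rewrite ?(mulr0, mulr1, addr0, add0r) //; apply: lin; lia.
Qed.

Lemma rmorph_linform (B : comNzRingType) (f : {rmorphism P3 -> B}) (l : P3) :
  is_linform l ->
  f l = f (C3 (coef3 l 1 0 0)) * f (PX0 R) + f (C3 (coef3 l 0 1 0)) * f (PX1 R)
        + f (C3 (coef3 l 0 0 1)) * f (PX2 R).
Proof.
move=> lin; rewrite {1}(linform_decomp lin).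
move: (C3 _) (C3 _) (C3 _) (PX0 R) (PX1 R) (PX2 R) => *.
by rewrite !(rmorphD, rmorphM).
Qed.

Lemma QM_nonneg (H : seq P3) k (p : P3) (f : {rmorphism P3 -> R}) :
  (forall h, h \in H -> 0 <= f h) -> QM H k p -> 0 <= f p.
Proof.
move=> fH [sig [sig_sos ->]]; rewrite rmorph_sum; apply: sumr_ge0 => j _.
rewrite rmorphM; apply: mulr_ge0.
  have [[s ->] _] := sig_sos j.
  by rewrite rmorph_sum; apply: sumr_ge0 => q _; rewrite rmorphXn sqr_ge0.
case: j => [[|j] /= lt_j]; first by rewrite rmorph1.
by apply: fH; rewrite mem_nth.
Qed.

Lemma sos_order2 (s : seq {poly R}) :
  (\sum_(q <- s) q ^+ 2)`_0 = 0 -> (\sum_(q <- s) q ^+ 2)`_1 = 0.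
Proof.
rewrite !coef_sum => /eqP; rewrite psumr_eq0 => [/allP q0|q _]; last first.
  by rewrite expr2 coef0M -expr2 sqr_ge0.
apply: big1_seq => q /andP[_ /q0]; rewrite expr2 coef0M mulf_eq0 orbb => /eqP q0_0.
by rewrite coefM big_ord_recr big_ord1 /= q0_0 mul0r mulr0 addr0.
Qed.

End TrivariatePolynomials.

Section ConvexClosure.
Variables (R : rcfType) (n : nat).
Implicit Types (A : 'rV[R]_n -> Prop) (v : 'rV[R]_n).

Lemma conv_self A v : A v -> conv A v.
Proof. by move=> Av; exists 1%N, (fun=> 1), (fun=> v); rewrite !big_ord1 scale1r. Qed.

Lemma conv_segment A (p q : 'rV[R]_n) (t : R) : 0 <= t <= 1 -> A p -> A q ->
  conv A ((1 - t) *: p + t *: q).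
Proof.
case/andP=> t_ge0 t_le1 Ap Aq.
exists 2%N, (fun i => if i == ord0 then 1 - t else t),
  (fun i => if i == ord0 then p else q).
split; first by move=> i; case: ifP => _; rewrite ?subr_ge0.
split; first by rewrite big_ord_recr big_ord1 /= subrK.
split; first by move=> i; case: ifP.
by rewrite big_ord_recr big_ord1.
Qed.

Lemma conv_coord_ge0 A (i : 'I_n) : (forall v, A v -> 0 <= v ord0 i) ->
  forall v, conv A v -> 0 <= v ord0 i.
Proof.
move=> A_ge0 v [m [w [p [w_ge0 [_ [Ap ->]]]]]].
by rewrite summxE; apply: sumr_ge0 => j _; rewrite mxE mulr_ge0 ?A_ge0.
Qed.

Lemma clos_coord_ge0 A (i : 'I_n) : (forall v, A v -> 0 <= v ord0 i) ->
  forall v, clos A v -> 0 <= v ord0 i.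
Proof.
move=> A_ge0 v closv; rewrite leNgt; apply/negP => v_lt0.
have [|y [Ay near_y]] := closv (- v ord0 i); first by rewrite oppr_gt0.
have := le_lt_trans (ler_norm _) (near_y i).
by rewrite -[X in _ < X]add0r ltrD2r ltNge A_ge0.
Qed.

End ConvexClosure.

Section Example.
Variable R : rcfType.
Notation P3 := (mpoly3 R).

Lemma Gt_ex_nonneg (a b c : R) :
  0 <= a -> 0 <= c ^+ 3 - a * b ^+ 2 -> a ^+ 2 + b ^+ 2 + c ^+ 2 = 1 ->
  forall h, h \in Gt_ex R -> 0 <= eval3 a b c h.
Proof.
move=> a_ge0 cusp sphere h; rewrite !inE.
(* Generalising the generators keeps the morphism rewrites from unfolding
   the concrete polynomials. *)
move: (eval3_PX0 a b c) (eval3_PX1 a b c) (eval3_PX2 a b c).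
move: (PX0 R) (PX1 R) (PX2 R) => X0 X1 X2 e0 e1 e2.
case/or4P => /eqP ->;
  rewrite ?(rmorphB, rmorphD, rmorphM, rmorphXn, rmorph1) e0 ?e1 ?e2 //.
  by rewrite sphere subrr.
by rewrite -!addrA -!opprD !addrA sphere subrr.
Qed.

Lemma QM_Gt_ex_shape k (l : P3) : QM (Gt_ex R) k l ->
  exists (s0 s1 s2 s3 s4 : P3), is_sos s0 /\
    l = s0 + s1 * PX0 R + s2 * (PX2 R ^+ 3 - PX0 R * PX1 R ^+ 2)
        + s3 * (PX0 R ^+ 2 + PX1 R ^+ 2 + PX2 R ^+ 2 - 1)
        + s4 * (1 - PX0 R ^+ 2 - PX1 R ^+ 2 - PX2 R ^+ 2).
Proof.
case=> sig [sig_sos ->]; rewrite !big_ord_recl big_ord0 /= mulr1 addr0 !addrA.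
by do 5 eexists; split; [exact: (sig_sos ord0).1 | reflexivity].
Qed.

Lemma QM_restrict01 k (l : P3) : QM (Gt_ex R) k l ->
  exists (s : seq {poly R}) (r : {poly R}),
    restrict01 R l = \sum_(q <- s) q ^+ 2 + r * 'X^2.
Proof.
case/QM_Gt_ex_shape => s0 [s1 [s2 [s3 [s4 [[s ->] ->]]]]].
exists (map (restrict01 R) s).
exists (restrict01 R s2 * 'X + restrict01 R s3 - restrict01 R s4).
move: (restrict01_PX0 R) (restrict01_PX1 R) (restrict01_PX2 R).
move: (PX0 R) (PX1 R) (PX2 R) => X0 X1 X2 e0 e1 e2.
rewrite !(rmorphB, rmorphD, rmorphM, rmorphXn, rmorph1) e0 e1 e2.
rewrite rmorph_sum big_map (eq_bigr _ (fun q _ => rmorphXn _ _ q)); ring.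
Qed.

Lemma QM_Gt_ex_linform_X2 k (l : P3) : QM (Gt_ex R) k l -> is_linform l ->
  coef3 l 0 1 0 = 0 -> coef3 l 0 0 1 = 0.
Proof.
move=> Ql lin B0; have [s [r Er]] := QM_restrict01 Ql.
have Rl : restrict01 R l = (coef3 l 0 1 0)%:P + (coef3 l 0 0 1)%:P * 'X.
  by rewrite (rmorph_linform _ lin) !restrict01_C restrict01_PX0 restrict01_PX1
    restrict01_PX2 mulr0 add0r mulr1.
have coefE i : (i < 2)%N -> (restrict01 R l)`_i = (\sum_(q <- s) q ^+ 2)`_i.
  by rewrite Er coefD coefMXn => ->; rewrite addr0.
have := coefE 1%N; rewrite Rl coefD coefC coefCM coefX /= mulr1 add0r => -> //.
by apply: sos_order2; rewrite -coefE // Rl coefD coefC coefCM coefX mulr0 addr0 B0.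
Qed.

Lemma THt_Gt_ex_full k (x : 'rV[R]_2) : THt (Gt_ex R) k x.
Proof.
move=> l Ql lin; set A := coef3 l 1 0 0; set B := coef3 l 0 1 0.
have evalE a b c : ev3 l a b c = A * a + B * b + coef3 l 0 0 1 * c.
  by rewrite ev3E (rmorph_linform _ lin) !eval3_C eval3_PX0 eval3_PX1 eval3_PX2.
have feasible (a b c : R) : 0 <= a -> 0 <= c ^+ 3 - a * b ^+ 2 ->
    a ^+ 2 + b ^+ 2 + c ^+ 2 = 1 -> 0 <= A * a + B * b + coef3 l 0 0 1 * c.
  by move=> *; rewrite -evalE ev3E; apply: (QM_nonneg _ Ql); apply: Gt_ex_nonneg.
have axis (t : R) : t ^+ 2 = 1 -> 0 <= B * t.
  move=> t2; have := @feasible 0 t 0 (lexx 0); rewrite !mulr0 add0r addr0.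
  by apply; nra.
have A_ge0 : 0 <= A.
  have := @feasible 1 0 0 ler01; rewrite !mulr0 !addr0 mulr1.
  by apply; lra.
have B_eq0 : B = 0.
  have := axis 1 (expr1n _ _); have := axis (-1); rewrite sqrrN expr1n => /(_ erefl).
  by rewrite mulr1 mulrN1; lra.
rewrite evalE B_eq0 (QM_Gt_ex_linform_X2 Ql lin B_eq0) mulr1 !mul0r !addr0.
exact: A_ge0.
Qed.

Lemma S_ex_coord1 (v : 'rV[R]_2) : S_ex v -> 0 <= v ord0 (inord 1).
Proof.
rewrite /S_ex => cusp; rewrite -(exprn_odd_ge0 _ (isT : odd 3)).
by have := sqr_ge0 (v ord0 (inord 0)); lra.
Qed.

(* A point with x2 > 0 lies between the origin and m x, which is in S
   for m = 1 + x1^2 / x2^3. *)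
Lemma conv_S_ex_upper (x : 'rV[R]_2) : 0 < x ord0 (inord 1) -> conv (@S_ex R) x.
Proof.
set X := x ord0 (inord 0); set Y := x ord0 (inord 1) => Y_gt0.
have Y3_gt0 : 0 < Y ^+ 3 by rewrite exprn_gt0.
set m := 1 + X ^+ 2 / Y ^+ 3.
have m_ge1 : 1 <= m by rewrite lerDl divr_ge0 ?sqr_ge0 ?ltW.
have m_gt0 : 0 < m by lra.
have -> : x = (1 - m^-1) *: 0 + m^-1 *: (m *: x).
  by rewrite scaler0 add0r scalerA mulVf ?gt_eqF // scale1r.
apply: conv_segment; first by rewrite invr_ge0 ltW // invr_le1 ?unitf_gt0.
  by rewrite /S_ex !mxE; lra.
rewrite /S_ex !mxE -/X -/Y (_ : _ - _ = m ^+ 2 * Y ^+ 3).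
  by rewrite mulr_ge0 ?sqr_ge0 ?ltW.
by rewrite /m; field; rewrite gt_eqF.
Qed.

(* The closed convex hull of S is the half-plane x2 >= 0; points with
   x2 = 0 are approached by shifting upwards. *)
Lemma clos_conv_S_ex (x : 'rV[R]_2) :
  clos (conv (@S_ex R)) x <-> 0 <= x ord0 (inord 1).
Proof.
split=> [closx|]; first exact: (clos_coord_ge0 (conv_coord_ge0 S_ex_coord1) closx).
move=> x1_ge0 e e_gt0.
exists (x + (e / 2) *: delta_mx ord0 (inord 1)); split.
  by apply: conv_S_ex_upper; rewrite !mxE !eqxx /= mulr1; lra.
move=> i; rewrite !mxE addrAC subrr add0r normrM ger0_norm; last lra.
by case: (_ && _); rewrite ?normr0 ?normr1; lra.
Qed.

(* (0, t, 0) with t = +-1 is the limit of (c^3, t, c) in S~o as c -> 0. *)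
Lemma clos_Sto_ex_axis (t : R) : t ^+ 2 = 1 -> clos (@Sto_ex R) (vec3 0 t 0).
Proof.
move=> t2 e e_gt0; set c := e / (e + 2).
have c_gt0 : 0 < c by rewrite divr_gt0 //; lra.
have c_lt1 : c < 1 by rewrite ltr_pdivrMr; lra.
have c_lt_e : c < e by rewrite ltr_pdivrMr; nra.
have c3_lt_e : c ^+ 3 < e by nra.
exists (vec3 (c ^+ 3) t c); split.
  by rewrite /Sto_ex !mxE !inordK //= t2 mulr1 subrr lexx exprn_gt0.
move=> i; rewrite !mxE; case: i => [[|[|[|//]]] _] /=.
- by rewrite subr0 ger0_norm // ltW // exprn_gt0.
- by rewrite subrr normr0.
- by rewrite subr0 ger0_norm // ltW.
Qed.

Lemma conv_clos_Sto_ex_not_pointed : ~ pointed (conv (clos (@Sto_ex R))).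
Proof.
have e1 := clos_Sto_ex_axis (expr1n _ 2).
have eN1 : clos (@Sto_ex R) (- vec3 0 1 0).
  have -> : - vec3 0 1 0 = vec3 0 (-1) 0 :> 'rV[R]_3.
    apply/rowP => i; rewrite !mxE.
    by case: i => [[|[|[|//]]] _] /=; rewrite ?oppr0.
  by apply: clos_Sto_ex_axis; rewrite sqrrN expr1n.
move=> /(_ _ (conv_self e1) (conv_self eN1)) /rowP /(_ (inord 1)) /eqP.
by rewrite !mxE inordK //= oner_eq0.
Qed.

End Example.

Theorem mainTheorem19 (R : rcfType) :
  clos (@Sto_ex R) (vec3 0 1 0) /\
  clos (@Sto_ex R) (vec3 0 (-1) 0) /\
  ~ pointed (conv (clos (@Sto_ex R))) /\
  (forall k : nat, (1 <= k)%N -> forall x : 'rV[R]_2, THt (Gt_ex R) k x) /\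
  (forall x : 'rV[R]_2, clos (conv (@S_ex R)) x <-> 0 <= x ord0 (inord 1)) /\
  ~ (forall x : 'rV[R]_2,
       (forall k : nat, (1 <= k)%N -> THt (Gt_ex R) k x) <->
       clos (conv (@S_ex R)) x).
Proof.
split; first exact: clos_Sto_ex_axis (expr1n _ 2).
split; first by apply: clos_Sto_ex_axis; rewrite sqrrN expr1n.
split; first exact: conv_clos_Sto_ex_not_pointed.
split; first by move=> k _ x; apply: THt_Gt_ex_full.
split; first exact: clos_conv_S_ex.
move=> /(_ (vec2 0 (-1))) [/(_ (fun k _ => @THt_Gt_ex_full R k _)) + _].
by rewrite clos_conv_S_ex mxE inordK //=; lra.
Qed.
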